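(* Suppose the geodesic metric space $X$ has the RBP with respect to pieces $\{X_i:i\in I\}$ and constant $M>0$. Let $C\ge 0$, $i\in I$, $x,y\in N_C(X_i)$, and let $\gamma$ be any geodesic from $x$ to $y$. Then $\gamma\subseteq N_{2M+2\max\{M,C\}}(X_i)$. In particular (taking $C=0$) each $X_i$ is $4M$-quasi-convex.
   Context: For $x\in X$ and $r>0$, $B(x;r)=\{z: d(x,z)<r\}$; $N_r(A)=\{z: d(z,A)\le r\}$. Relative bottleneck property (RBP): a geodesic metric space $X$ has the RBP with respect to a collection of subsets (''pieces'') $\{X_i:i\in I\}$ and a constant $M>0$ if $X=\bigcup_{i\in I}X_i$ and for all $i\neq j$ in $I$ there is a finite ordered set $I_{i,j}=\{i=i_0,i_1,\dots,i_s=j\}\subseteq I$ and, for each $r\in\{0,\dots,s-1\}$, a point $w_r\in X_{i_r}\cap X_{i_{r+1}}$ such that every path in $X$ from a point of $X_i$ to a point of $X_j$ meets $B(w_r;M)$. A subset $A$ is $k$-quasi-convex if every geodesic with endpoints in $A$ lies in $N_k(A)$. *)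

From Stdlib Require Export Reals List.
Open Scope R_scope.

Section Metric.
Context {X : Type} (d : X -> X -> R).

Definition is_metric : Prop :=
  (forall x y, 0 <= d x y) /\
  (forall x y, d x y = 0 <-> x = y) /\
  (forall x y, d x y = d y x) /\
  (forall x y z, d x z <= d x y + d y z).

Definition ball (x : X) (r : R) (z : X) : Prop := d x z < r.

(* d(z,A) <= r, with d(z,A) = inf_{a in A} d(z,a) (= +oo if A empty),
   written out: for every eps > 0 there is a in A with d(z,a) < r + eps. *)
Definition dist_set_le (A : X -> Prop) (z : X) (r : R) : Prop :=
  forall eps, 0 < eps -> exists a, A a /\ d z a < r + eps.

Definition nbhd (r : R) (A : X -> Prop) (z : X) : Prop := dist_set_le A z r.

(* a path: a continuous map [0,1] -> X (represented as R -> X, only its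
   values on [0,1] matter) *)
Definition is_path (p : R -> X) : Prop :=
  forall t, 0 <= t <= 1 -> forall eps, 0 < eps ->
    exists delta, 0 < delta /\
      forall s, 0 <= s <= 1 -> Rabs (s - t) < delta -> d (p s) (p t) < eps.

Definition is_geodesic (g : R -> X) (x y : X) : Prop :=
  g 0 = x /\ g (d x y) = y /\
  forall s t, 0 <= s <= d x y -> 0 <= t <= d x y ->
    d (g s) (g t) = Rabs (s - t).

Definition geod_in (g : R -> X) (x y : X) (S : X -> Prop) : Prop :=
  forall t, 0 <= t <= d x y -> S (g t).

Definition geodesic_space : Prop :=
  is_metric /\ forall x y, exists g, is_geodesic g x y.

Definition quasi_convex (k : R) (A : X -> Prop) : Prop :=
  forall x y g, A x -> A y -> is_geodesic g x y -> geod_in g x y (nbhd k A).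

(* Relative bottleneck property w.r.t. pieces P : I -> (X -> Prop) and M > 0.
   The finite ordered set I_{i,j} = {i_0,...,i_s} is a duplicate-free list l
   of length s+1 with i_0 = i, i_s = j; w r is the point w_r. *)
Definition RBP {I : Type} (P : I -> X -> Prop) (M : R) : Prop :=
  0 < M /\
  (forall z, exists i, P i z) /\
  forall i j, i <> j ->
    exists (l : list I) (w : nat -> X),
      NoDup l /\ (1 <= length l)%nat /\
      nth 0 l i = i /\ nth (length l - 1) l i = j /\
      forall r, (r < length l - 1)%nat ->
        P (nth r l i) (w r) /\ P (nth (S r) l i) (w r) /\
        forall p, is_path p -> P i (p 0) -> P j (p 1) ->
          exists t, 0 <= t <= 1 /\ ball (w r) M (p t).

End Metric.

From Stdlib Require Import Lra Lia Classical.

(* Let z = g t be a point of a geodesic g from x to y, where x and y lie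
   within C of the piece P i, and let z lie in another piece P j.  The RBP
   gives a point w of P i such that every path from P i to P j meets the
   ball B(w; M).  Going from a point x' of P i near x to x along a geodesic
   and then along g up to z is such a path; hence w is within M + d(x',x) of
   some point g a with a <= t.  Symmetrically (coming from y along g
   reversed) w is within M + d(y',y) of some g b with b >= t.  A squeeze
   inequality on geodesics, d(w, g t) <= d(w, g a) + d(w, g b), then gives
   d(z, w) < 2M + 2C + eps, and w lies in P i. *)

Section GeodesicBottleneck.

Variable X : Type.
Variable d : X -> X -> R.
Hypothesis d_metric : is_metric d.

Lemma dist_nonneg (x y : X) : 0 <= d x y.
Proof. apply d_metric. Qed.

Lemma dist_self (x : X) : d x x = 0.
Proof. apply d_metric; reflexivity. Qed.

Lemma dist_sym (x y : X) : d x y = d y x.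
Proof. apply d_metric. Qed.

Lemma dist_triangle (x y z : X) : d x z <= d x y + d y z.
Proof. apply d_metric. Qed.

Lemma in_nbhd0 (A : X -> Prop) (z : X) : A z -> nbhd d 0 A z.
Proof.
  intros Hz eps Heps; exists z; split; [exact Hz|].
  rewrite dist_self; lra.
Qed.

Lemma nbhd_mono (r r' : R) (A : X -> Prop) (z : X) :
  r <= r' -> nbhd d r A z -> nbhd d r' A z.
Proof.
  intros Hr Hz eps Heps; destruct (Hz eps Heps) as [a [Ha Hda]].
  exists a; split; [exact Ha | lra].
Qed.

Definition iso_seg (h : R -> X) (T : R) : Prop :=
  forall a b, 0 <= a <= T -> 0 <= b <= T -> d (h a) (h b) = Rabs (a - b).

Lemma geodesic_iso_seg (g : R -> X) (x y : X) :
  is_geodesic d g x y -> iso_seg g (d x y).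
Proof. intros [_ [_ Hg]]; exact Hg. Qed.

Lemma iso_seg_dist (h : R -> X) (T a b : R) :
  iso_seg h T -> 0 <= a -> a <= b -> b <= T -> d (h a) (h b) = b - a.
Proof.
  intros Hh Ha Hab Hb; rewrite Hh by lra.
  rewrite Rabs_left1 by lra; ring.
Qed.

Lemma iso_seg_restrict (h : R -> X) (T T' : R) :
  iso_seg h T -> T' <= T -> iso_seg h T'.
Proof. intros Hh HT a b Ha Hb; apply Hh; lra. Qed.

Lemma iso_seg_reverse (h : R -> X) (T : R) :
  iso_seg h T -> iso_seg (fun v => h (T - v)) T.
Proof.
  intros Hh a b Ha Hb; rewrite Hh by lra.
  replace (T - a - (T - b)) with (- (a - b)) by ring; apply Rabs_Ropp.
Qed.

Lemma lipschitz_path (p : R -> X) (K : R) : 0 <= K ->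
  (forall s t, 0 <= s <= 1 -> 0 <= t <= 1 -> d (p s) (p t) <= K * Rabs (s - t)) ->
  is_path d p.
Proof.
  intros HK Hp t Ht eps Heps; exists (eps / (K + 1)); split.
  { apply Rdiv_lt_0_compat; lra. }
  intros s Hs Hst; eapply Rle_lt_trans; [apply Hp; assumption|].
  assert (Hq : eps = eps / (K + 1) * (K + 1)) by (field; lra).
  assert (K * Rabs (s - t) <= K * (eps / (K + 1))) by (apply Rmult_le_compat_l; lra).
  nra.
Qed.

Definition concat_path (sigma : R -> X) (D : R) (h : R -> X) (T : R) (t : R) : X :=
  if Rle_dec t (1/2) then sigma (2 * t * D) else h ((2 * t - 1) * T).

Definition bottleneck (A B : X -> Prop) (w : X) (M : R) : Prop :=
  forall p, is_path d p -> A (p 0) -> B (p 1) ->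
    exists t, 0 <= t <= 1 /\ ball d w M (p t).

Section Concatenation.

Variables (sigma h : R -> X) (D T : R).
Hypotheses (HD : 0 <= D) (HT : 0 <= T).
Hypotheses (Hsigma : iso_seg sigma D) (Hh : iso_seg h T) (Hjoin : sigma D = h 0).

(* Passing through the junction point, the concatenation is
   2(D+T)-Lipschitz. *)
Lemma concat_path_lipschitz (s t : R) : 0 <= s <= 1 -> 0 <= t <= 1 ->
  d (concat_path sigma D h T s) (concat_path sigma D h T t) <= 2 * (D + T) * Rabs (s - t).
Proof.
  intros Hs Ht; unfold concat_path.
  destruct (Rle_dec s (1/2)), (Rle_dec t (1/2)).
  - rewrite Hsigma by (split; nra).
    unfold Rabs; repeat destruct Rcase_abs; nra.
  - eapply Rle_trans; [apply (dist_triangle _ (sigma D))|].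
    rewrite Hsigma, Hjoin, Hh by (split; nra).
    unfold Rabs; repeat destruct Rcase_abs; nra.
  - eapply Rle_trans; [apply (dist_triangle _ (sigma D))|].
    rewrite Hsigma, Hjoin, Hh by (split; nra).
    unfold Rabs; repeat destruct Rcase_abs; nra.
  - rewrite Hh by (split; nra).
    unfold Rabs; repeat destruct Rcase_abs; nra.
Qed.

Lemma concat_is_path : is_path d (concat_path sigma D h T).
Proof.
  apply lipschitz_path with (2 * (D + T)); [lra|].
  exact concat_path_lipschitz.
Qed.

Lemma concat_path_start : concat_path sigma D h T 0 = sigma 0.
Proof.
  unfold concat_path; destruct (Rle_dec 0 (1/2)); [|lra].
  f_equal; ring.
Qed.

Lemma concat_path_end : concat_path sigma D h T 1 = h T.
Proof.
  unfold concat_path; destruct (Rle_dec 1 (1/2)); [lra|].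
  f_equal; ring.
Qed.

Lemma bottleneck_concat (A B : X -> Prop) (w : X) (M : R) :
  bottleneck A B w M -> A (sigma 0) -> B (h T) ->
  (exists u, 0 <= u <= D /\ d w (sigma u) < M) \/
  (exists v, 0 <= v <= T /\ d w (h v) < M).
Proof.
  intros Hw HA HB.
  destruct (Hw (concat_path sigma D h T)) as [t [Ht Hball]].
  - exact concat_is_path.
  - rewrite concat_path_start; exact HA.
  - rewrite concat_path_end; exact HB.
  - unfold ball, concat_path in Hball; destruct (Rle_dec t (1/2)).
    + left; exists (2 * t * D); split; [split; nra | exact Hball].
    + right; exists ((2 * t - 1) * T); split; [split; nra | exact Hball].
Qed.

(* Hence w is within M + D of the segment h itself: if the ball meets
   sigma at sigma u, then d(w, h 0) <= d(w, sigma u) + (D - u). *)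
Lemma bottleneck_near_segment (A B : X -> Prop) (w : X) (M : R) :
  bottleneck A B w M -> A (sigma 0) -> B (h T) ->
  exists v, 0 <= v <= T /\ d w (h v) < M + D.
Proof.
  intros Hw HA HB.
  destruct (bottleneck_concat A B w M Hw HA HB) as [[u [Hu Hwu]] | [v [Hv Hwv]]].
  - exists 0; split; [lra|].
    rewrite <- Hjoin.
    pose proof (dist_triangle w (sigma u) (sigma D)) as Htri.
    rewrite (iso_seg_dist sigma D u D) in Htri by (auto; lra).
    lra.
  - exists v; split; [exact Hv | lra].
Qed.

End Concatenation.

Lemma geodesic_squeeze (g : R -> X) (L a t b : R) (w : X) :
  iso_seg g L -> 0 <= a -> a <= t -> t <= b -> b <= L ->
  d w (g t) <= d w (g a) + d w (g b).
Proof.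
  intros Hg Ha Hat Htb Hb.
  pose proof (dist_triangle w (g a) (g t)) as Hleft.
  pose proof (dist_triangle w (g b) (g t)) as Hright.
  pose proof (dist_triangle (g a) w (g b)) as Hspan.
  rewrite (iso_seg_dist g L a t Hg) in Hleft by lra.
  rewrite (dist_sym (g b) (g t)), (iso_seg_dist g L t b Hg) in Hright by lra.
  rewrite (iso_seg_dist g L a b Hg), (dist_sym (g a) w) in Hspan by lra.
  lra.
Qed.

Lemma rbp_bottleneck {I : Type} (P : I -> X -> Prop) (M : R) (i j : I) :
  RBP d P M -> i <> j -> exists w, P i w /\ bottleneck (P i) (P j) w M.
Proof.
  intros [_ [_ Hrbp]] Hij.
  destruct (Hrbp i j Hij) as [l [w [_ [Hlen [Hfirst [Hlast Hlinks]]]]]].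
  assert (Hlen' : (0 < length l - 1)%nat).
  { destruct (Nat.eq_dec (length l) 1) as [E|E]; [|lia].
    rewrite E in Hlast; simpl in Hlast; rewrite Hfirst in Hlast; contradiction. }
  destruct (Hlinks 0%nat Hlen') as [Hw [_ Hbot]].
  rewrite Hfirst in Hw; exists (w 0%nat); split; [exact Hw | exact Hbot].
Qed.

Lemma geodesic_near_piece {I : Type} (P : I -> X -> Prop) (M C : R) (i : I)
    (x y : X) (g : R -> X) :
  (forall u v, exists s, is_geodesic d s u v) -> RBP d P M -> 0 <= C ->
  nbhd d C (P i) x -> nbhd d C (P i) y -> is_geodesic d g x y ->
  geod_in d g x y (nbhd d (2 * M + 2 * C) (P i)).
Proof.
  intros Hgeodesics Hrbp HC Hx Hy Hg t Ht eps Heps.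
  set (L := d x y) in *.
  assert (Hiso : iso_seg g L) by exact (geodesic_iso_seg g x y Hg).
  destruct Hg as [Hg0 [HgL _]]; fold L in HgL.
  pose proof Hrbp as [HM [Hcover _]].
  destruct (Hcover (g t)) as [j Hj].
  destruct (classic (i = j)) as [<- | Hij].
  { exists (g t); split; [exact Hj|]. rewrite dist_self; lra. }
  destruct (rbp_bottleneck P M i j Hrbp Hij) as [w [Hw Hbot]].
  destruct (Hx (eps / 4)) as [x' [Hx' Hxx']]; [lra|].
  destruct (Hy (eps / 4)) as [y' [Hy' Hyy']]; [lra|].
  destruct (Hgeodesics x' x) as [sx Hsx].
  destruct (Hgeodesics y' y) as [sy Hsy].
  (* From the side of x: the path x' -> x -> g t along sx and g. *)
  assert (Hnear_x : exists a, 0 <= a <= t /\ d w (g a) < M + d x' x).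
  { pose proof Hsx as [Hsx0 [Hsx1 _]].
    apply (bottleneck_near_segment sx g (d x' x) t (dist_nonneg _ _) ltac:(lra)
             (geodesic_iso_seg _ _ _ Hsx) (iso_seg_restrict g L t Hiso ltac:(lra))
             ltac:(rewrite Hsx1, Hg0; reflexivity) (P i) (P j) w M Hbot);
      [rewrite Hsx0 | ]; assumption. }
  (* From the side of y: the path y' -> y -> g t along sy and g reversed. *)
  assert (Hnear_y : exists v, 0 <= v <= L - t /\ d w (g (L - v)) < M + d y' y).
  { pose proof Hsy as [Hsy0 [Hsy1 _]].
    apply (bottleneck_near_segment sy (fun v => g (L - v)) (d y' y) (L - t)
             (dist_nonneg _ _) ltac:(lra) (geodesic_iso_seg _ _ _ Hsy)
             (iso_seg_restrict _ L (L - t) (iso_seg_reverse g L Hiso) ltac:(lra))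
             ltac:(rewrite Hsy1, Rminus_0_r, HgL; reflexivity) (P i) (P j) w M Hbot).
    - rewrite Hsy0; exact Hy'.
    - replace (L - (L - t)) with t by ring; exact Hj. }
  destruct Hnear_x as [a [Ha Hwa]], Hnear_y as [v [Hv Hwb]].
  pose proof (geodesic_squeeze g L a t (L - v) w Hiso ltac:(lra) ltac:(lra) ltac:(lra) ltac:(lra)).
  rewrite (dist_sym x' x) in Hwa; rewrite (dist_sym y' y) in Hwb.
  exists w; split; [exact Hw|].
  rewrite dist_sym; lra.
Qed.

End GeodesicBottleneck.

Theorem lemma2p3 (X : Type) (d : X -> X -> R) (I : Type)
  (P : I -> X -> Prop) (M : R)
  (Hgeod : geodesic_space d) (Hrbp : RBP d P M) :
  (forall (C : R) (i : I) (x y : X) (g : R -> X),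
     0 <= C -> nbhd d C (P i) x -> nbhd d C (P i) y ->
     is_geodesic d g x y ->
     geod_in d g x y (nbhd d (2 * M + 2 * Rmax M C) (P i)))
  /\ (forall i : I, quasi_convex d (4 * M) (P i)).
Proof.
  destruct Hgeod as [Hmetric Hgeodesics].
  assert (Hnear : forall (C : R) (i : I) (x y : X) (g : R -> X),
     0 <= C -> nbhd d C (P i) x -> nbhd d C (P i) y -> is_geodesic d g x y ->
     geod_in d g x y (nbhd d (2 * M + 2 * Rmax M C) (P i))).
  { intros C i x y g HC Hx Hy Hg t Ht.
    apply (nbhd_mono X d (2 * M + 2 * C)); [pose proof (Rmax_r M C); lra|].
    exact (geodesic_near_piece X d Hmetric P M C i x y g Hgeodesics Hrbp HC Hx Hy Hg t Ht). }
  split; [exact Hnear|].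
  intros i x y g Hx Hy Hg t Ht.
  assert (HM : 0 < M) by apply Hrbp.
  replace (4 * M) with (2 * M + 2 * Rmax M 0) by (rewrite Rmax_left by lra; ring).
  apply (Hnear 0 i x y g (Rle_refl 0)); try apply (in_nbhd0 X d Hmetric); assumption.
Qed.
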